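(* In the discontinuous Galerkin setting of the context, for every $T\in\mathcal T_h$, every face $e\in F_h$ with $e\subset\partial T$ (with $\mathbf n_e=\mathbf n_{\partial T}|_e$ the outward normal), every $\ell\in\{1,2\}$ and every $v_h\in V_h$, \[\|\chi_\ell^{1/2}\nabla v_h|_T\|^2_{L^2(e)^d}\le C_\chi h_T^{-1}\|\chi_\ell^{1/2}\nabla v_h\|^2_{L^2(T)^d}.\]
   Context: $\mathcal D\subset\mathbb R^d$ is an open convex polygon; $\chi_1,\chi_2\in W^{1,\infty}(\mathcal D)$ are non-negative weight functions forming a partition of unity with $\|\chi_\ell\|_{L^\infty}\le1$. $\mathcal T_h$ is a (shape-regular) mesh of $\mathcal D$ whose elements $T$ are affine images of a fixed reference convex polyhedron; $h_T$ is the diameter of $T$, $h=\max_T h_T$, and $\chi_\ell|_T$ is linear on every $T\in\mathcal T_h$. $F_h$ is the set of faces of the mesh. $V_h=\{v_h\in L^2(\mathcal D):v_h|_T\in\mathbb P^1(T)\ \forall T\in\mathcal T_h\}$ (piecewise affine, possibly discontinuous); $v_h|_T$ on a face denotes the trace from $T$. $C_\chi>0$ is the discrete trace constant (independent of $h$ and $T$) such that for all $T\in\mathcal T_h$, all faces $e\subset\partial T$ and all polynomials $q$ of degree at most $1$ on $T$, $\|q\|_{L^1(e)}\le C_\chi h_T^{-1}\|q\|_{L^1(T)}$. *)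

From HB Require Import structures.
From mathcomp Require Import all_boot all_order all_algebra.
From mathcomp Require Import all_classical all_reals all_analysis.
Set Implicit Arguments. Unset Strict Implicit. Unset Printing Implicit Defensive.
Import Order.TTheory GRing.Theory Num.Theory.
Import numFieldNormedType.Exports.
Local Open Scope classical_set_scope.
Local Open Scope ring_scope.

Definition borelV (R : realType) (d : nat) := g_sigma_algebraType (@open 'rV[R]_d).

Definition enorm (R : realType) (d : nat) (x : 'rV[R]_d) : R :=
  Num.sqrt (\sum_(i < d) x 0 i ^+ 2).

Definition diam (R : realType) (d : nat) (A : set 'rV[R]_d) : R :=
  sup [set enorm (x - y) | x in A & y in A].

Definition is_P1 (R : realType) (d : nat) (q : 'rV[R]_d -> R) : Prop :=
  exists (a : R) (b : 'rV[R]_d), forall x, q x = a + \sum_(i < d) b 0 i * x 0 i.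

Definition grad (R : realType) (d : nat) (f : 'rV[R]_d -> R) (x : 'rV[R]_d) : 'rV[R]_d :=
  \row_(i < d) ('D_(delta_mx 0 i) f x).

Definition convex_dom (R : realType) (d : nat) (D : set 'rV[R]_d) : Prop :=
  forall x y, D x -> D y -> forall t : R, 0 <= t <= 1 -> D ((1 - t) *: x + t *: y).

(* Lipschitz on a set (W^{1,infty} on a convex domain). *)
Definition lip_on (R : realType) (d : nat) (D : set 'rV[R]_d) (f : 'rV[R]_d -> R) : Prop :=
  exists L : R, forall x y, D x -> D y -> `|f x - f y| <= L * enorm (x - y).

Definition wgrad2 (R : realType) (d : nat) (chi p : 'rV[R]_d -> R) (x : 'rV[R]_d) : R :=
  \sum_(i < d) (Num.sqrt (chi x) * grad p x 0 i) ^+ 2.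

From HB Require Import structures.
From mathcomp Require Import all_boot all_order all_algebra.
From mathcomp Require Import all_classical all_reals all_analysis.
From mathcomp Require Import ring.
Set Implicit Arguments. Unset Strict Implicit.
Import Order.TTheory GRing.Theory Num.Theory.
Import numFieldNormedType.Exports.
Local Open Scope classical_set_scope.
Local Open Scope ring_scope.

(** On an element [T] the gradient of [p] is a constant vector [g] and
    [chi_l] is affine and nonnegative, so the integrand [chi_l |g|^2] is a
    nonnegative affine polynomial on [T], equal to its own absolute value.
    The discrete trace inequality applied to it is the claim; the face [e]
    lies in [closure T = T], so the identity of integrands holds on [e] too. *)

Section P1.
Variables (R : realType) (d : nat).
Implicit Types (p q : 'rV[R]_d -> R) (x : 'rV[R]_d).

Lemma is_P1_scale c q : is_P1 q -> is_P1 (fun x => c * q x).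
Proof.
move=> [a [b hb]]; exists (c * a), (c *: b) => x.
rewrite hb mulrDr mulr_sumr; congr (_ + _).
by apply: eq_bigr => j _; rewrite !mxE mulrA.
Qed.

Lemma grad_P1_const p : is_P1 p -> forall x, grad p x = grad p 0.
Proof.
move=> [a [b hp]] x; apply/rowP => i; rewrite !mxE /derive.
(* The difference quotients of an affine map do not depend on the base point. *)
suff incr_eq y : (fun h : R => h^-1 *: ((p \o shift y) (h *: delta_mx 0 i) - p y)) =
    (fun h : R => h^-1 *: \sum_(j < d) b 0 j * (h *: (delta_mx 0 i : 'rV[R]_d)) 0 j).
  by rewrite !incr_eq.
apply/funext => h /=; rewrite /shift !hp; congr (_ *: _).
rewrite opprD addrACA subrr add0r -sumrB.
by apply: eq_bigr => j _; rewrite !mxE; ring.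
Qed.

Lemma wgrad2E chi p x : 0 <= chi x -> wgrad2 chi p x = chi x * enorm (grad p x) ^+ 2.
Proof.
move=> chi_ge0; rewrite /wgrad2 /enorm sqr_sqrtr; last first.
  by apply: sumr_ge0 => i _; exact: sqr_ge0.
by rewrite mulr_sumr; apply: eq_bigr => i _; rewrite exprMn sqr_sqrtr.
Qed.

End P1.

Theorem lemma5p4 (R : realType) (d : nat)
  (D : set 'rV[R]_d)
  (lam : {measure set (borelV R d) -> \bar R})
  (Th Fh : set (set 'rV[R]_d))
  (sig : set 'rV[R]_d -> {measure set (borelV R d) -> \bar R})
  (chi : 'I_2 -> 'rV[R]_d -> R)
  (C : R)
  (hD : open D) (hDconv : convex_dom D)
  (hTh : forall T, Th T -> T `<=` closure D)
  (hTcl : forall T, Th T -> closed T)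
  (hFcl : forall e, Fh e -> closed e)
  (hchi_nn : forall l x, closure D x -> 0 <= chi l x)
  (hchi_pu : forall x, closure D x -> chi 0 x + chi 1 x = 1)
  (hchi_inf : forall l x, closure D x -> `|chi l x| <= 1)
  (hchi_W1inf : forall l, lip_on (closure D) (chi l))
  (hchi_lin : forall l T, Th T -> exists q, is_P1 q /\ (forall x, T x -> chi l x = q x))
  (hC : 0 < C)
  (htrace : forall T e q, Th T -> Fh e -> e `<=` closure T `\` interior T -> is_P1 q ->
     (\int[sig e]_(x in e) (`|q x|)%:E
        <= (C * (diam T)^-1)%:E * \int[lam]_(x in T) (`|q x|)%:E)%E)
  (vh : 'rV[R]_d -> R)
  (hvh : forall T, Th T -> exists p, is_P1 p /\ (forall x, interior T x -> vh x = p x)) :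
  forall T e (l : 'I_2) (p : 'rV[R]_d -> R),
    Th T -> Fh e -> e `<=` closure T `\` interior T ->
    is_P1 p -> (forall x, interior T x -> vh x = p x) ->
    (\int[sig e]_(x in e) (wgrad2 (chi l) p x)%:E
       <= (C * (diam T)^-1)%:E * \int[lam]_(x in T) (wgrad2 (chi l) p x)%:E)%E.
Proof.
move=> T e l p hT he heT hp _.
have [q [hq chi_q]] := hchi_lin l T hT.
pose g2 := enorm (grad p 0) ^+ 2.
have integrandE x : T x -> wgrad2 (chi l) p x = `|g2 * q x|.
  move=> Tx; have chi_ge0 := hchi_nn l x (hTh T hT x Tx).
  rewrite wgrad2E // (grad_P1_const hp) -chi_q // ger0_norm; first by rewrite mulrC.
  by rewrite mulr_ge0 // sqr_ge0.
have e_sub_T : e `<=` T.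
  by move=> x /heT[+ _]; rewrite -(closure_id T).1 //; exact: hTcl.
have -> : (\int[sig e]_(x in e) (wgrad2 (chi l) p x)%:E =
            \int[sig e]_(x in e) (`|g2 * q x|)%:E)%E.
  by apply: eq_integral => x /set_mem /e_sub_T Tx; rewrite integrandE.
have -> : (\int[lam]_(x in T) (wgrad2 (chi l) p x)%:E =
            \int[lam]_(x in T) (`|g2 * q x|)%:E)%E.
  by apply: eq_integral => x /set_mem Tx; rewrite integrandE.
exact: (htrace T e (fun x => g2 * q x) hT he heT (is_P1_scale g2 hq)).
Qed.
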